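(* Let $u:\mathbb{R}_{\ge 0}\to[0,1]$ be non-increasing with $u(0)=1$ and $\lim_{t\to\infty}u(t)=0$. Let there be $n$ algorithms with runtime CDFs $F_1,\dots,F_n$, expected utilities $U_i=\int_0^\infty u(t)\,dF_i(t)$, let $i^{opt}\in\arg\max_i U_i$ and $\Delta_i=U_{i^{opt}}-U_i$. For captimes $\kappa_1,\dots,\kappa_n>0$ let $LB_i=\int_0^{\kappa_i}u(t)\,dF_i(t)$, $UB_i=LB_i+u(\kappa_i)(1-F_i(\kappa_i))$, and $i^*\in\arg\max_i LB_i$. Let $\epsilon>0$. If $$u(\kappa_i)\big(1-F_i(\kappa_i)\big)\le\Delta_i+\frac{\epsilon}{2}\quad\text{for all algorithms } i,$$ then the skeptic is convinced that both $i^{opt}$ and $i^*$ are $\epsilon$-optimal, i.e., $LB_{i^{opt}}\ge UB_i-\epsilon$ for all $i\ne i^{opt}$ and $LB_{i^*}\ge UB_i-\epsilon$ for all $i\neq i^*$.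
   Context: An algorithm $j$ is $\epsilon$-optimal if $U_j\ge\max_i U_i-\epsilon$. In the prover–skeptic setting, the skeptic sees each CDF $F_i$ only on $[0,\kappa_i]$ and is ''convinced that $j$ is $\epsilon$-optimal'' exactly when $LB_j\ge UB_i-\epsilon$ for all $i\neq j$; this condition implies that $j$ is $\epsilon$-optimal. *)

From mathcomp Require Import all_boot all_order all_algebra.
From mathcomp Require Import all_classical all_reals all_analysis.
Set Implicit Arguments. Unset Strict Implicit. Unset Printing Implicit Defensive.
Import Order.TTheory GRing.Theory Num.Theory.
Local Open Scope classical_set_scope.
Local Open Scope ring_scope.

(* A runtime distribution is a Borel probability measure P on R (concentrated
   on [0,+oo[); its CDF is F(t) = P(]-oo,t]). Integrals "∫ u dF" are
   Lebesgue–Stieltjes integrals, i.e. integrals against P. *)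

Definition rt_cdf (R : realType) (P : probability R R) (t : R) : R :=
  fine (P [set` `]-oo, t]]).

Definition exp_util (R : realType) (P : probability R R) (u : R -> R) : \bar R :=
  (\int[P]_(t in `[0%R, +oo[) (u t)%:E)%E.

Definition LB (R : realType) (P : probability R R) (u : R -> R) (k : R) : \bar R :=
  (\int[P]_(t in `[0%R, k]) (u t)%:E)%E.

Definition UB (R : realType) (P : probability R R) (u : R -> R) (k : R) : \bar R :=
  (LB P u k + (u k * (1 - rt_cdf P k))%:E)%E.

From mathcomp Require Import all_boot all_order all_algebra.
From mathcomp Require Import all_classical all_reals all_analysis.
From mathcomp Require Import measurable_realfun lra.
Import Order.TTheory GRing.Theory Num.Theory.
Local Open Scope classical_set_scope.
Local Open Scope ring_scope.

(* Splitting at the captime, U = LB + ∫_(κ,∞) u dF, and since 0 <= u <= u(κ)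
   on (κ,∞) the tail lies between 0 and u(κ)(1 - F(κ)); hence
   LB_i <= U_i <= UB_i.  The capping hypothesis then gives
   UB_i <= U_i + Δ_i + ε/2 = U_opt + ε/2, and applied to i_opt itself
   (where Δ = 0) it gives LB_opt >= U_opt - ε/2, so UB_i - ε <= LB_opt.
   Since i* maximises LB, also LB_opt <= LB_i*. *)

Lemma probability_itvoy_rt_cdf (R : realType) (P : probability R R) (k : R) :
  P `]k, +oo[%classic = (1 - rt_cdf P k)%:E.
Proof.
rewrite -setCitvl probability_setC // EFinB /rt_cdf fineK //.
exact: fin_num_measure.
Qed.

Section Utility.
Context {R : realType} {u : R -> R}.
Hypothesis u_ge0 : forall t, 0 <= t -> 0 <= u t.
Hypothesis u_noninc : forall s t, 0 <= s -> s <= t -> u t <= u s.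

Lemma measurable_utility : measurable_fun (`[0%R, +oo[%classic : set R) u.
Proof.
apply: (@eq_measurable_fun _ _ R R _ (fun t => u (Num.max t 0)) u).
  by move=> t; rewrite inE /= in_itv /= andbT => t0; rewrite max_l.
apply: nonincreasing_measurable => // s t st.
apply: u_noninc; first by rewrite le_max lexx orbT.
by rewrite ge_max !le_max st lexx !orbT.
Qed.

Let measurable_Eutility :
  measurable_fun (`[0%R, +oo[%classic : set R) (fun t => (u t)%:E).
Proof. by apply/measurable_EFinP; exact: measurable_utility. Qed.

Let Eutility_ge0 t : `[0%R, +oo[%classic t -> (0 <= (u t)%:E)%E.
Proof. by rewrite /= in_itv /= andbT lee_fin; exact: u_ge0. Qed.

Section Captime.
Context {P : probability R R} {k : R}.
Hypothesis k_ge0 : 0 <= k.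

Let tail := (\int[P]_(t in `]k, +oo[) (u t)%:E)%E.

Let itv_split : `[0%R, +oo[%classic = `[0%R, k]%classic `|` `]k, +oo[%classic :> set R.
Proof. by rewrite -itv_bndbnd_setU // bnd_simp. Qed.

Let sub_head : (`[0%R, k]%classic : set R) `<=` `[0%R, +oo[%classic.
Proof. by rewrite itv_split; exact: subsetUl. Qed.

Let sub_tail : (`]k, +oo[%classic : set R) `<=` `[0%R, +oo[%classic.
Proof. by rewrite itv_split; exact: subsetUr. Qed.

Let exp_util_LB_tail : exp_util P u = (LB P u k + tail)%E.
Proof.
rewrite /exp_util /LB /tail itv_split ge0_integral_setU //.
- by rewrite -itv_split.
- by rewrite -itv_split.
apply/disj_setPS => x [] /=; rewrite !in_itv /= andbT => /andP[_ xk] kx.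
by move: (lt_le_trans kx xk); rewrite ltxx.
Qed.

Let tail_ge0 : (0 <= tail)%E.
Proof. by apply: integral_ge0 => t /sub_tail; exact: Eutility_ge0. Qed.

Let tail_le : (tail <= (u k * (1 - rt_cdf P k))%:E)%E.
Proof.
apply: (@le_trans _ _ (\int[P]_(t in `]k, +oo[) (cst (u k)%:E) t)%E).
  apply: ge0_le_integral => //.
  - by move=> t /sub_tail; exact: Eutility_ge0.
  - exact: measurable_funS measurable_Eutility.
  - move=> t /=; rewrite in_itv /= andbT lee_fin => /ltW.
    exact: u_noninc.
by rewrite integral_cst // EFinM -probability_itvoy_rt_cdf.
Qed.

Lemma LB_ge0 : (0 <= LB P u k)%E.
Proof. by apply: integral_ge0 => t /sub_head; exact: Eutility_ge0. Qed.

Lemma LB_fin_num : LB P u k \is a fin_num.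
Proof.
rewrite ge0_fin_numE ?LB_ge0 //.
apply: (@le_lt_trans _ _ (\int[P]_(t in `[0%R, k]) (cst (u 0)%:E) t)%E).
  apply: ge0_le_integral => //.
  - by move=> t /sub_head; exact: Eutility_ge0.
  - exact: measurable_funS measurable_Eutility.
  - by move=> t /=; rewrite in_itv /= lee_fin => /andP[t0 _]; exact: u_noninc.
rewrite integral_cst //.
have /fin_numPlt/andP[] // : ((u 0)%:E * P `[0%R, k]%classic)%E \is a fin_num.
by rewrite fin_numM // fin_num_measure.
Qed.

Lemma exp_util_fin_num : exp_util P u \is a fin_num.
Proof.
rewrite exp_util_LB_tail fin_numD LB_fin_num /= ge0_fin_numE //.
by rewrite (le_lt_trans tail_le) // ltry.
Qed.

Lemma LB_le_exp_util : (LB P u k <= exp_util P u)%E.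
Proof. by rewrite exp_util_LB_tail leeDl. Qed.

Lemma exp_util_le_UB : (exp_util P u <= UB P u k)%E.
Proof. by rewrite exp_util_LB_tail /UB leeD2l. Qed.

End Captime.

Lemma UB_sub_le_LB (P Q : probability R R) (k l eps : R) :
  0 <= k -> 0 <= l ->
  ((u k * (1 - rt_cdf P k))%:E
     <= exp_util Q u - exp_util P u + (eps / 2)%:E)%E ->
  ((u l * (1 - rt_cdf Q l))%:E <= (eps / 2)%:E)%E ->
  (UB P u k - eps%:E <= LB Q u l)%E.
Proof.
move=> k0 l0.
have := LB_le_exp_util (P:=P) k0; have := exp_util_le_UB (P:=Q) l0.
rewrite /UB.
rewrite -(fineK (LB_fin_num (P:=P) k0)) -(fineK (LB_fin_num (P:=Q) l0)).
rewrite -(fineK (exp_util_fin_num (P:=P) k0)) -(fineK (exp_util_fin_num (P:=Q) l0)).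
by rewrite -!EFinD !lee_fin; lra.
Qed.

End Utility.

Theorem lemma6 (R : realType) (u : R -> R)
  (u_range : forall t : R, 0 <= t -> 0 <= u t <= 1)
  (u_noninc : forall s t : R, 0 <= s -> s <= t -> u t <= u s)
  (u0 : u 0 = 1)
  (u_lim : u x @[x --> +oo%R] --> 0%R)
  (n : nat) (P : 'I_n -> probability R R)
  (P_nonneg : forall i, P i [set` `]-oo, 0[] = 0%E)
  (i_opt : 'I_n)
  (i_opt_max : forall i, (exp_util (P i) u <= exp_util (P i_opt) u)%E)
  (kappa : 'I_n -> R) (kappa_pos : forall i, 0 < kappa i)
  (i_star : 'I_n)
  (i_star_max : forall i, (LB (P i) u (kappa i) <= LB (P i_star) u (kappa i_star))%E)
  (eps : R) (eps_pos : 0 < eps)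
  (Hcap : forall i, ((u (kappa i) * (1 - rt_cdf (P i) (kappa i)))%:E
           <= (exp_util (P i_opt) u - exp_util (P i) u) + (eps / 2)%:E)%E) :
  (forall i, i != i_opt ->
     (UB (P i) u (kappa i) - eps%:E <= LB (P i_opt) u (kappa i_opt))%E) /\
  (forall i, i != i_star ->
     (UB (P i) u (kappa i) - eps%:E <= LB (P i_star) u (kappa i_star))%E).
Proof.
have u_ge0 t : 0 <= t -> 0 <= u t by move=> /u_range /andP[].
have kappa_ge0 i : 0 <= kappa i := ltW (kappa_pos i).
have cap_opt : ((u (kappa i_opt) * (1 - rt_cdf (P i_opt) (kappa i_opt)))%:E
                 <= (eps / 2)%:E)%E.
  have := Hcap i_opt.
  by rewrite subee ?add0e // (exp_util_fin_num u_ge0 u_noninc (kappa_ge0 i_opt)).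
have opt_convinced i : (UB (P i) u (kappa i) - eps%:E
                          <= LB (P i_opt) u (kappa i_opt))%E.
  exact: (UB_sub_le_LB u_ge0 u_noninc (P i) (P i_opt) (kappa i) (kappa i_opt) eps
    (kappa_ge0 i) (kappa_ge0 i_opt) (Hcap i) cap_opt).
split=> i _; first exact: opt_convinced.
exact: le_trans (opt_convinced i) (i_star_max i_opt).
Qed.
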